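(* Let $a\in\hat{\mathbb Z}$, $Y^*\in C_+([0,\infty))$, $F\in L^1_{\mathrm{loc}}([0,\infty))$ with $F\ge0$, and let $(\mathscr G_t)$ be a filtration to which $Y^*$, $F$ and $\mathbf W$ are adapted and with respect to which $\mathbf W$ is a Brownian motion. Suppose $Y^*(t)=Y^*(0)+W_a(t)+\beta\int_0^t\big(\frac1{Y^*(s)}-F(s)\big)ds$ for all $t\ge0$. Then for all $t'\le t''$ in $[0,\infty)$, almost surely, $Y^*(t'')-\inf_{s\in[t',t'']}Y^*(s)=\sup_{s\in[t',t'']}(Y^*(t'')-Y^*(s))\le Q^{t'}_a(t'')$ and $\sup_{s<t,\ s,t\in[t',t'']}(Y^*(t)-Y^*(s))\le Q^{t',t''}_a:=\sup_{t\in[t',t'']}Q^{t'}_a(t)$.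
   Context: Fixed $\beta\ge1$. $\hat{\mathbb Z}=\tfrac12+\mathbb Z$; $W_a=B_{a+1/2}-B_{a-1/2}$ where $(B_i)_{i\in\mathbb Z}$ are independent standard Brownian motions; $C_+([0,\infty))=\{y\in C([0,\infty)):y(t)>0\ \forall t\}$. For $t_1\ge0$, $Q^{t_1}_a$ denotes the Bessel-type process started from $0$ at time $t_1$: the process in $C([t_1,\infty))$, strictly positive on $(t_1,\infty)$, solving $Q^{t_1}_a(t)=W_a(t)-W_a(t_1)+\int_{t_1}^t\frac{\beta}{Q^{t_1}_a(s)}ds$, $t\ge t_1$. *)

From HB Require Import structures.
From mathcomp Require Import all_boot all_order all_algebra.
From mathcomp Require Import all_classical all_reals all_analysis.
Set Implicit Arguments. Unset Strict Implicit. Unset Printing Implicit Defensive.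
Import Order.TTheory GRing.Theory Num.Theory.
Import numFieldNormedType.Exports.
Local Open Scope classical_set_scope.
Local Open Scope ring_scope.

Definition filtration {d} {Omega : measurableType d} {R : realType}
  (G : R -> set (set Omega)) : Prop :=
  (forall t, 0 <= t -> sigma_algebra setT (G t) /\ G t `<=` measurable) /\
  (forall s t, 0 <= s -> s <= t -> G s `<=` G t).

Definition adapted {Omega : Type} {R : realType}
  (G : R -> set (set Omega)) (X : Omega -> R -> R) : Prop :=
  forall t, 0 <= t -> forall E : set R, measurable E ->
    G t [set w | E (X w t)].

Definition natural_filtration {Omega : Type} {R : realType}
  (B : int -> Omega -> R -> R) (t : R) : set (set Omega) :=
  <<s [set A | exists i r (E : set R), [/\ 0 <= r, r <= t, measurable E &
                 A = [set w | E (B i w r)]]] >>.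

Definition incr_event {Omega : Type} {R : realType}
  (X : int -> Omega -> R -> R) (J : seq int) (E : int -> set R) (s t : R)
  : set Omega :=
  [set w | forall i, i \in J -> E i (X i w t - X i w s)].

Definition indep_std_BM_wrt {d} {Omega : measurableType d} {R : realType}
  (P : probability Omega R) (G : R -> set (set Omega))
  (B : int -> Omega -> R -> R) : Prop :=
  (forall i, adapted G (B i)) /\
  {ae P, forall w, forall i,
     B i w 0 = 0 /\ {within `[0, +oo[, continuous (B i w)}} /\
  (forall s t, 0 <= s -> s < t -> forall (J : seq int) (E : int -> set R),
     uniq J -> (forall i, measurable (E i)) -> forall A, G s A ->
     P (A `&` incr_event B J E s t) =
       (P A * \prod_(i <- J) normal_prob 0 (Num.sqrt (t - s)) (E i))%E).

(* A family X is a (G_t)-Brownian motion family (given that it is already a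
   Brownian motion family): it is adapted and its increments after s are
   independent of G_s. *)
Definition indep_incr_wrt {d} {Omega : measurableType d} {R : realType}
  (P : probability Omega R) (G : R -> set (set Omega))
  (X : int -> Omega -> R -> R) : Prop :=
  forall s t, 0 <= s -> s < t -> forall (J : seq int) (E : int -> set R),
    (forall i, measurable (E i)) -> forall A, G s A ->
    P (A `&` incr_event X J E s t) = (P A * P (incr_event X J E s t))%E.

(* W_a = B_{a+1/2} - B_{a-1/2}; the half-integer a = k + 1/2 is encoded by
   the integer k, so W_k = B_{k+1} - B_k. *)
Definition Wfam {Omega : Type} {R : realType} (B : int -> Omega -> R -> R)
  : int -> Omega -> R -> R :=
  fun k w t => B (k + 1)%R w t - B k w t.

From HB Require Import structures.
From mathcomp Require Import all_boot all_order all_algebra.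
From mathcomp Require Import all_classical all_reals all_analysis.
From mathcomp Require Import measurable_realfun lebesgue_integral_differentiation.
From mathcomp Require Import ring lra.
Set Implicit Arguments. Unset Strict Implicit. Unset Printing Implicit Defensive.
Import Order.TTheory GRing.Theory Num.Theory.
Import numFieldNormedType.Exports.
Local Open Scope classical_set_scope.
Local Open Scope ring_scope.

(* The statement is pathwise.  Write Q for Q^{t'}_a.  Fix t' <= s <= t and let
   D(r) = Y(r) - Y(s) - Q(r), so D(s) = -Q(s) <= 0.  If D(t) > 0, let u be the
   last time in [s, t] with D(u) <= 0.  On ]u, t] we have Q < Y, hence
   1/Y - F <= 1/Q.  Since Y and Q are driven by the same W_a, their increments
   over [u, t] differ only by beta times the integral of these drifts, so
   Y(t) - Y(u) <= Q(t) - Q(u), i.e. D(t) <= D(u) <= 0, a contradiction.  Thus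
   Y(t) - Y(s) <= Q(t), and the bounds on the suprema follow. *)

Lemma continuous_withinV (R : numFieldType) (A : set R) (f : R -> R) :
  {within A, continuous f} -> (forall x, A x -> f x != 0) ->
  {within A, continuous (fun x => (f x)^-1)}.
Proof.
move=> cf f_neq0; apply: (@within_continuous_comp _ _ _ A f GRing.inv) cf.
by move=> _ /set_mem[x Ax <-]; exact/inv_continuous/f_neq0.
Qed.

Lemma last_exit_le0 (R : realType) (g : R -> R) (a b : R) :
  a <= b -> {within `[a, b], continuous g} -> g a <= 0 -> 0 < g b ->
  exists2 u, a <= u < b & g u <= 0 /\ forall x, u < x <= b -> 0 < g x.
Proof.
move=> ab cg ga gb.
set S := `[a, b] `&` g @^-1` `]-oo, 0].
have hasS : has_sup S.
  split; first by exists a; split; rewrite /= in_itv/= ?lexx ?ab ?ga.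
  by exists b => x [/=]; rewrite in_itv/= => /andP[].
have S_sup : S (sup S).
  have /closure_id {1}-> : closed S.
    rewrite closed_setSI; last exact: interval_closed.
    by apply: preimage_closed (fun x _ => cg x) _; exact: interval_closed.
  by case: hasS => S_ne S_ub; exact: closure_sup.
have [/=] := S_sup; rewrite !in_itv/= => /andP[a_sup sup_b] g_sup.
exists (sup S); last split => //.
  rewrite a_sup lt_neqAle sup_b andbT; apply: contraTneq gb => <-.
  by rewrite -leNgt.
move=> x /andP[sup_x xb]; rewrite ltNge; apply/negP => gx.
have Sx : S x.
  by split; rewrite /= in_itv/= ?xb ?gx ?andbT // (le_trans a_sup) ?ltW.
by move: (sup_upper_bound hasS Sx); rewrite leNgt sup_x.
Qed.

Lemma sub_inf_image {T : Type} (R : realType) (A : set T) (g : T -> R) (c : R) :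
  A !=set0 -> has_lbound (g @` A) ->
  c - inf (g @` A) = sup [set c - g x | x in A].
Proof.
move=> [x0 Ax0] [m lb_m].
have gA_ne : g @` A !=set0 by exists (g x0), x0.
have ub : has_sup [set c - g x | x in A].
  split; first by exists (c - g x0), x0.
  by exists (c - m) => _ [x Ax <-]; rewrite lerB // lb_m //; exists x.
apply/eqP; rewrite eq_le; apply/andP; split.
- rewrite lerBlDr -lerBlDl; apply: lb_le_inf => // _ [x Ax <-].
  by rewrite lerBlDl -lerBlDr; apply: sup_upper_bound => //; exists x.
- apply: ge_sup; first by case: ub.
  move=> _ [x Ax <-]; rewrite lerB //; apply: ge_inf; first by exists m.
  by exists x.
Qed.

Section pathwise_comparison.
Variables (R : realType) (beta t1 : R) (w y f q : R -> R).
Hypothesis beta_gt0 : 0 < beta.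
Hypothesis t1_ge0 : 0 <= t1.
Hypothesis y_cont : {within `[0, +oo[, continuous y}.
Hypothesis y_gt0 : forall t : R, 0 <= t -> 0 < y t.
Hypothesis f_ge0 : forall t : R, 0 <= t -> 0 <= f t.
Hypothesis f_integrable : forall t : R, 0 <= t ->
  lebesgue_measure.-integrable `[0, t] (EFin \o f).
Hypothesis y_eq : forall t : R, 0 <= t ->
  y t = y 0 + w t + beta * \int[lebesgue_measure]_(s in `[0, t])
                             ((y s)^-1 - f s).
Hypothesis q_cont : {within `[t1, +oo[, continuous q}.
Hypothesis q_gt0 : forall t, t1 < t -> 0 < q t.
Hypothesis q_eq : forall t, t1 <= t ->
  ((q t - (w t - w t1))%:E =
   beta%:E * \int[lebesgue_measure]_(s in `[t1, t]) ((q s)^-1)%:E)%E.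

Lemma bessel_path_start : q t1 = 0.
Proof.
have := q_eq (lexx t1).
by rewrite set_itv1 integral_set1 mule0 subrr subr0 => -[].
Qed.

Lemma bessel_path_ge0 (t : R) : t1 <= t -> 0 <= q t.
Proof.
by rewrite le_eqVlt => /predU1P[<-|/q_gt0/ltW//]; rewrite bessel_path_start.
Qed.

Lemma bessel_path_integrable_inv (t : R) : t1 <= t ->
  lebesgue_measure.-integrable `[t1, t] (EFin \o fun s => (q s)^-1).
Proof.
move=> t1t; apply/integrableP; split.
  (* [q t1 = 0]: [1/q] is continuous only on [`]t1, t]] *)
  apply/measurable_EFinP/measurable_fun_itv_obnd_cbndP.
  apply: subspace_continuous_measurable_fun => //.
  apply: continuous_withinV => [|x]; last first.
    by rewrite /= in_itv/= => /andP[/q_gt0/gt_eqF->].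
  apply: continuous_subspaceW q_cont => x.
  by rewrite /= !in_itv/= andbT => /andP[/ltW].
have inv_ge0 x : x \in `[t1, t] -> (0 <= ((q x)^-1)%:E)%E.
  by rewrite /= in_itv/= lee_fin invr_ge0 => /andP[/bessel_path_ge0].
under eq_integral => x /set_mem/inv_ge0/gee0_abs -> do [].
(* the integral is finite because [beta > 0] times it equals a real number *)
have := q_eq t1t; have := integral_ge0 _ inv_ge0.
case: (\int[_]_(_ in _) _)%E => [r _ _| _ | //]; first exact: ltry.
by rewrite gt0_muley ?lte_fin.
Qed.

Lemma bessel_path_increment (u t : R) : t1 <= u -> u <= t ->
  q t - q u = w t - w u +
    beta * \int[lebesgue_measure]_(s in `]u, t]) (q s)^-1.
Proof.
have q_eqR r : t1 <= r -> q r - (w r - w t1) =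
    beta * \int[lebesgue_measure]_(s in `[t1, r]) (q s)^-1.
  move=> t1r; have := q_eq t1r; rewrite /Rintegral.
  rewrite -(fineK (integrable_fin_num _ (bessel_path_integrable_inv t1r))) //.
  by rewrite -EFinM => -[].
move=> t1u ut; have t1t := le_trans t1u ut.
rewrite -(Rintegral_itvB (bessel_path_integrable_inv t1t)) ?bnd_simp //.
by rewrite mulrBr -q_eqR // -q_eqR //; ring.
Qed.

Lemma drifted_path_integrable_drift (t : R) : 0 <= t ->
  lebesgue_measure.-integrable `[0, t] (EFin \o fun s => (y s)^-1 - f s).
Proof.
move=> t_ge0.
have inv_y_integrable :
    lebesgue_measure.-integrable `[0, t] (EFin \o fun s => (y s)^-1).
  apply: continuous_compact_integrable; first exact: segment_compact.
  apply: continuous_withinV => [|x]; last first.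
    by rewrite /= in_itv/= => /andP[/y_gt0/gt_eqF->].
  apply: continuous_subspaceW y_cont => x.
  by rewrite /= !in_itv/= andbT => /andP[].
by have := integrableB _ inv_y_integrable (f_integrable t_ge0); apply.
Qed.

Lemma drifted_path_increment (u t : R) : 0 <= u -> u <= t ->
  y t - y u = w t - w u +
    beta * \int[lebesgue_measure]_(s in `]u, t]) ((y s)^-1 - f s).
Proof.
move=> u_ge0 ut; have t_ge0 := le_trans u_ge0 ut.
rewrite -(Rintegral_itvB (drifted_path_integrable_drift t_ge0)) ?bnd_simp //.
by rewrite (y_eq t_ge0) (y_eq u_ge0); ring.
Qed.

Lemma increment_le_bessel_increment (u t : R) : t1 <= u -> u <= t ->
  (forall x, u < x <= t -> q x < y x) -> y t - y u <= q t - q u.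
Proof.
move=> t1u ut q_lt_y; have u_ge0 := le_trans t1_ge0 t1u.
have t1t := le_trans t1u ut; have t_ge0 := le_trans u_ge0 ut.
rewrite drifted_path_increment // bessel_path_increment //.
rewrite lerD2l ler_wpM2l ?(ltW beta_gt0) //; apply: le_Rintegral => //.
- apply: integrableS (drifted_path_integrable_drift t_ge0) => //.
  by apply: subset_itvScc; rewrite bnd_simp.
- apply: integrableS (bessel_path_integrable_inv t1t) => //.
  by apply: subset_itvScc; rewrite bnd_simp.
move=> x; rewrite /= in_itv/= => /andP[ux xt].
have x_ge0 : 0 <= x by rewrite (le_trans u_ge0) ?ltW.
have q_gt0x : 0 < q x by rewrite q_gt0 // (le_lt_trans t1u).
rewrite lerBlDr (@le_trans _ _ (q x)^-1) ?lerDl ?f_ge0 //.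
by rewrite lef_pV2 ?posrE ?y_gt0 // ltW // q_lt_y // ux xt.
Qed.

Lemma increment_le_bessel (s t : R) : t1 <= s -> s <= t -> y t - y s <= q t.
Proof.
move=> t1s st; rewrite leNgt; apply/negP => q_lt_incr.
have g_cont : {within `[s, t], continuous (y - cst (y s) - q)}.
  apply: within_continuousB; last first.
    by apply: continuous_subspaceW q_cont; apply: subset_itv; rewrite bnd_simp.
  apply: within_continuousB => [|x]; last exact: cvg_cst.
  apply: continuous_subspaceW y_cont.
  by apply: subset_itv; rewrite bnd_simp ?(le_trans t1_ge0).
have [||u /andP[su ut] [gu g_gt0]] := last_exit_le0 st g_cont.
- by rewrite !fctE subrr sub0r oppr_le0 bessel_path_ge0.
- by rewrite !fctE subr_gt0.
have q_lt_y x : u < x <= t -> q x < y x.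
  have := y_gt0 (le_trans t1_ge0 t1s).
  by move=> y_s_gt0 /g_gt0; rewrite !fctE; lra.
have := increment_le_bessel_increment (le_trans t1s su) (ltW ut) q_lt_y.
by move: gu; rewrite !fctE; lra.
Qed.

Lemma sup_increments_le_bessel (t : R) : t1 <= t ->
  sup [set y t - y s | s in `[t1, t]] <= q t.
Proof.
move=> t1t; apply: ge_sup.
  by exists (y t - y t1), t1; rewrite //= in_itv/= lexx t1t.
move=> _ [s + <-]; rewrite /= in_itv/= => /andP[t1s st].
exact: increment_le_bessel.
Qed.

Lemma sup_pair_increments_le_bessel (t2 : R) : t1 <= t2 ->
  sup [set x | exists s t, [/\ t1 <= s, s < t, t <= t2 & x = y t - y s]]
    <= sup [set q t | t in `[t1, t2]].
Proof.
move=> t1t2; set Q := [set q t | t in `[t1, t2]].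
have [c _ q_le_qc] :
    exists2 c, c \in `[t1, t2] & forall t, t \in `[t1, t2] -> q t <= q c.
  apply: EVT_max t1t2 _; apply: continuous_subspaceW q_cont.
  by apply: subset_itv; rewrite bnd_simp.
have q_le_sup t : t1 <= t <= t2 -> q t <= sup Q.
  move=> t_in; apply: sup_upper_bound; last by exists t; rewrite /= ?in_itv.
  split; first by exists (q t), t; rewrite /= ?in_itv.
  by exists (q c) => _ [r r_in <-]; exact: q_le_qc.
set I := [set x | _].
have [->|/set0P I_ne] := eqVneq I set0.
  by rewrite sup0 -bessel_path_start q_le_sup // lexx t1t2.
apply: ge_sup I_ne _ => _ [s [t [t1s st tt2 ->]]].
apply: le_trans (increment_le_bessel t1s (ltW st)) _.
by rewrite q_le_sup // tt2 (le_trans t1s (ltW st)).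
Qed.

End pathwise_comparison.

Theorem lemma3p2 (R : realType) (beta : R) (d : measure_display)
  (Omega : measurableType d) (P : probability Omega R)
  (B : int -> Omega -> R -> R) (G : R -> set (set Omega))
  (k : int) (Y F : Omega -> R -> R) (Q : R -> Omega -> R -> R) :
  1 <= beta ->
  indep_std_BM_wrt P (natural_filtration B) B ->
  filtration G ->
  adapted G Y -> adapted G F -> (forall j, adapted G (Wfam B j)) ->
  indep_incr_wrt P G (Wfam B) ->
  (forall w, {within `[0, +oo[, continuous (Y w)} /\
             (forall t, 0 <= t -> 0 < Y w t)) ->
  (forall w, (forall t, 0 <= t -> 0 <= F w t) /\
     (forall t, 0 <= t ->
        lebesgue_measure.-integrable `[0, t] (EFin \o F w))) ->
  {ae P, forall w, forall t, 0 <= t ->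
     Y w t = Y w 0 + Wfam B k w t +
       beta * Rintegral lebesgue_measure `[0, t]
                (fun s => (Y w s)^-1 - F w s)} ->
  (* Q t1 is the Bessel-type process Q^{t1}_a started from 0 at time t1 *)
  (forall t1, 0 <= t1 -> {ae P, forall w,
     {within `[t1, +oo[, continuous (Q t1 w)} /\
     (forall t, t1 < t -> 0 < Q t1 w t) /\
     (forall t, t1 <= t ->
        ((Q t1 w t - (Wfam B k w t - Wfam B k w t1))%:E =
          beta%:E * \int[lebesgue_measure]_(s in `[t1, t]) ((Q t1 w s)^-1)%:E)%E)}) ->
  forall t' t'', 0 <= t' -> t' <= t'' ->
  {ae P, forall w,
     [/\ Y w t'' - inf [set Y w s | s in `[t', t'']] =
           sup [set Y w t'' - Y w s | s in `[t', t'']],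
         sup [set Y w t'' - Y w s | s in `[t', t'']] <= Q t' w t'' &
         sup [set x | exists s t, [/\ t' <= s, s < t, t <= t'' &
                                      x = Y w t - Y w s]]
           <= sup [set Q t' w t | t in `[t', t'']]]}.
Proof.
move=> beta_ge1 _ _ _ _ _ _ Y_path F_path Y_eq Q_bessel t' t'' t'_ge0 t't''.
have beta_gt0 : 0 < beta := lt_le_trans ltr01 beta_ge1.
apply: filterS2 Y_eq (Q_bessel t' t'_ge0) => w Yw_eq [Qw_cont [Qw_gt0 Qw_eq]].
have [Yw_cont Yw_gt0] := Y_path w; have [Fw_ge0 Fw_int] := F_path w.
split.
- apply: sub_inf_image; first by exists t'; rewrite /= in_itv/= lexx t't''.
  exists 0 => _ [s + <-]; rewrite /= in_itv/= => /andP[t's _].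
  exact/ltW/Yw_gt0/(le_trans t'_ge0 t's).
- exact: (sup_increments_le_bessel beta_gt0 t'_ge0 Yw_cont Yw_gt0 Fw_ge0 Fw_int
    Yw_eq Qw_cont Qw_gt0 Qw_eq t't'').
- exact: (sup_pair_increments_le_bessel beta_gt0 t'_ge0 Yw_cont Yw_gt0 Fw_ge0
    Fw_int Yw_eq Qw_cont Qw_gt0 Qw_eq t't'').
Qed.
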